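(* There are absolute constants $c_0,c>0$ such that the following holds. Let $\mathcal{F}$ be a finite class of functions $\mathcal{S}\times\mathcal{A}\to[0,V_{\max}]$, $\Pi$ a finite class of policies, and $\pi_{\mathrm{cp}}\in\Pi$. Assume (1) $C_{\pi_{\mathrm{cp}}}:=\|d^{\pi_{\mathrm{cp}}}/d^D\|_\infty<\infty$ and $\mathcal{T}^{\pi_{\mathrm{cp}}}f\in\mathcal{F}$ for all $f\in\mathcal{F}$; (2) $Q^\pi\in\mathcal{F}$ for all $\pi\in\Pi$. Let $\mathcal{D}$ consist of $n$ i.i.d. samples from $D$, let $\delta\in(0,1)$, $\epsilon_0=c_0V_{\max}^2\log(|\mathcal{F}||\Pi|/\delta)/n$, and for $\pi\in\Pi$ define the version space $\mathcal{F}^\pi_{\epsilon_0}=\{f\in\mathcal{F}:\widehat{\mathcal{E}}(f;\pi)\le\epsilon_0\}$ and $J^-_{\mathrm{VS}}(\pi)=\min_{f\in\mathcal{F}^\pi_{\epsilon_0}}J_f(\pi)$ (with $\min\emptyset=+\infty$). Let $\hat\pi\in\arg\max_{\pi\in\Pi}J^-_{\mathrm{VS}}(\pi)$. Then with probability at least $1-\delta$, $$J(\pi_{\mathrm{cp}})-J(\hat\pi)\le c\,\frac{V_{\max}}{1-\gamma}\sqrt{\frac{C_{\pi_{\mathrm{cp}}}\log(|\mathcal{F}||\Pi|/\delta)}{n}}.$$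
   Context: MDP $(\mathcal{S},\mathcal{A},P,R,\gamma,d_0)$ with finite $\mathcal{S},\mathcal{A}$, deterministic reward $R:\mathcal{S}\times\mathcal{A}\to[0,R_{\max}]$, $\gamma\in[0,1)$, $V_{\max}=R_{\max}/(1-\gamma)$. For a policy $\pi$: $J(\pi)=\mathbb{E}_\pi[\sum_t\gamma^tr_t]$; $Q^\pi(s,a)=\mathbb{E}_\pi[\sum_t\gamma^tr_t\mid s_0=s,a_0=a]$; $f(s,\pi)=\sum_a\pi(a\mid s)f(s,a)$; $J_f(\pi)=\mathbb{E}_{s\sim d_0}[f(s,\pi)]$; $(\mathcal{T}^\pi f)(s,a)=R(s,a)+\gamma\mathbb{E}_{s'\sim P(\cdot\mid s,a)}[f(s',\pi)]$; $d^\pi(s,a)=(1-\gamma)\sum_{t\ge0}\gamma^t\Pr_\pi[s_t=s,a_t=a]$. Data distribution $d^D\in\Delta(\mathcal{S}\times\mathcal{A})$; $D$ is the distribution of $(s,a,r,s')$ with $(s,a)\sim d^D$, $r=R(s,a)$, $s'\sim P(\cdot\mid s,a)$. $\|d^\pi/d^D\|_\infty=\max_{s,a}d^\pi(s,a)/d^D(s,a)$ ($0/0=0$, nonzero$/0=\infty$). Empirical losses on dataset $\mathcal{D}$: $\widehat{\mathcal{L}}(f';f,\pi)=\frac{1}{|\mathcal{D}|}\sum_{(s,a,r,s')\in\mathcal{D}}(f'(s,a)-r-\gamma f(s',\pi))^2$ and $\widehat{\mathcal{E}}(f;\pi)=\max_{g\in\mathcal{F}}\big[\widehat{\mathcal{L}}(f;f,\pi)-\widehat{\mathcal{L}}(g;f,\pi)\big]$.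 Ties are broken arbitrarily. *)

From HB Require Import structures.
From mathcomp Require Import all_boot all_order all_algebra.
From mathcomp Require Import all_classical all_reals.
From mathcomp Require Import ereal topology normedtype sequences exp.
Set Implicit Arguments.
Unset Strict Implicit.
Unset Printing Implicit Defensive.
Import Order.TTheory GRing.Theory Num.Theory.
Import numFieldNormedType.Exports.
Local Open Scope ring_scope.

Definition rseries_sum (R : realType) (u : nat -> R) : R := limn (series u).

Section MDP.
Variables (R : realType) (S A : finType).

(* A (stochastic) policy: pi s a = pi(a|s). *)
Definition policy := {ffun S -> {ffun A -> R}}.
Definition qfun := {ffun S * A -> R}.
(* One transition sample (s, a, s'); the reward is r = Rw s a. *)
Definition sample := (S * A * S)%type.

Definition is_dist_S (d : {ffun S -> R}) := (forall s, 0 <= d s) /\ \sum_s d s = 1.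
Definition is_dist_SA (d : {ffun S * A -> R}) := (forall x, 0 <= d x) /\ \sum_x d x = 1.
Definition is_policy (pi : policy) :=
  forall s, (forall a, 0 <= pi s a) /\ \sum_a pi s a = 1.
Definition is_kernel (P : S -> A -> {ffun S -> R}) :=
  forall s a, is_dist_S (P s a).

Variables (P : S -> A -> {ffun S -> R}) (Rw : S -> A -> R) (gamma : R).

Definition fpol (f : qfun) (s : S) (pi : policy) : R := \sum_a pi s a * f (s, a).

Definition Jf (d0 : {ffun S -> R}) (f : qfun) (pi : policy) : R :=
  \sum_s d0 s * fpol f s pi.

Definition bellman (pi : policy) (f : qfun) : qfun :=
  [ffun x : S * A => Rw x.1 x.2 + gamma * \sum_s' P x.1 x.2 s' * fpol f s' pi].

Fixpoint sa_dist (pi : policy) (mu0 : S * A -> R) (t : nat) : S * A -> R :=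
  match t with
  | 0 => mu0
  | t'.+1 => fun y => \sum_(x : S * A) sa_dist pi mu0 t' x * P x.1 x.2 y.1 * pi y.1 y.2
  end.

Definition init_dist (d0 : {ffun S -> R}) (pi : policy) : S * A -> R :=
  fun x => d0 x.1 * pi x.1 x.2.

Definition point_dist (s : S) (a : A) : S * A -> R :=
  fun x => if x == (s, a) then 1 else 0.

Definition exp_reward (pi : policy) (mu0 : S * A -> R) (t : nat) : R :=
  \sum_(x : S * A) sa_dist pi mu0 t x * Rw x.1 x.2.

Definition Jpi (d0 : {ffun S -> R}) (pi : policy) : R :=
  rseries_sum (fun t => gamma ^+ t * exp_reward pi (init_dist d0 pi) t).

Definition Qpi (pi : policy) : qfun :=
  [ffun x : S * A => rseries_sum (fun t => gamma ^+ t * exp_reward pi (point_dist x.1 x.2) t)].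

Definition dpi (d0 : {ffun S -> R}) (pi : policy) : {ffun S * A -> R} :=
  [ffun x : S * A => (1 - gamma) * rseries_sum (fun t => gamma ^+ t * sa_dist pi (init_dist d0 pi) t x)].

(* ||d^pi/d^D||_inf < oo  (nonzero/0 = oo) *)
Definition conc_finite (d0 : {ffun S -> R}) (dD : {ffun S * A -> R}) (pi : policy) :=
  forall x, dD x = 0 -> dpi d0 pi x = 0.

(* ||d^pi/d^D||_inf (all ratios are >= 0; 0/0 = 0 as in MathComp) *)
Definition conc (d0 : {ffun S -> R}) (dD : {ffun S * A -> R}) (pi : policy) : R :=
  \big[Num.max/0]_(x : S * A) (dpi d0 pi x / dD x).

Definition emp_loss n (data : {ffun 'I_n -> sample}) (f' f : qfun) (pi : policy) : R :=
  n%:R^-1 * \sum_(i < n)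
    (f' ((data i).1.1, (data i).1.2) - Rw (data i).1.1 (data i).1.2
       - gamma * fpol f (data i).2 pi) ^+ 2.

(* E^(f; pi) = max_{g in F} [L^(f;f,pi) - L^(g;f,pi)]  (F nonempty; the default 0
   is attained by g = f whenever f \in F) *)
Definition emp_err n (F : seq qfun) (data : {ffun 'I_n -> sample}) (f : qfun) (pi : policy) : R :=
  \big[Num.max/0]_(g <- F) (emp_loss data f f pi - emp_loss data g f pi).

Definition Jminus_VS n (d0 : {ffun S -> R}) (F : seq qfun) (eps0 : R)
    (data : {ffun 'I_n -> sample}) (pi : policy) : \bar R :=
  \big[mine/+oo%E]_(f <- F | emp_err F data f pi <= eps0) ((Jf d0 f pi)%:E).

(* Probability, under n i.i.d. draws (s,a) ~ dD, s' ~ P(.|s,a), of an event *)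
Definition prob_data n (dD : {ffun S * A -> R}) (E : {ffun 'I_n -> sample} -> bool) : R :=
  \sum_(data : {ffun 'I_n -> sample} | E data)
     \prod_(i < n) (dD ((data i).1.1, (data i).1.2) * P (data i).1.1 (data i).1.2 (data i).2).

End MDP.

From HB Require Import structures.
From mathcomp Require Import all_boot all_order all_algebra.
From mathcomp Require Import all_classical all_reals.
From mathcomp Require Import ereal topology normedtype sequences exp.
From mathcomp Require Import ring lra.
Import Order.TTheory GRing.Theory Num.Theory.
Import numFieldNormedType.Exports.
Set Implicit Arguments.
Unset Strict Implicit.
Unset Printing Implicit Defensive.
Local Open Scope ring_scope.
Local Open Scope classical_set_scope.

(* Outside two families of rare events the regret bound is deterministic.  By a
   Bernstein-type Chernoff bound and a union bound, with probability >= 1 - delta: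
   (i)  every Q^pi (pi in Pi) has empirical excess loss <= n eps0 against every g in F,
        so Q^pi lies in the version space of pi;
   (ii) every f in F whose empirical excess loss against T^pi_cp f (which is in F) is
        <= n eps0 has population Bellman error ||f - T^pi_cp f||^2_{d^D} <= 4 eps0.
   Let f* minimise J_f(pi_cp) over the version space of pi_cp.  Then
   J_f*(pi_cp) = J^-(pi_cp) <= J^-(pi_hat) <= J_{Q^pi_hat}(pi_hat) = J(pi_hat), while the
   performance difference identity (1 - gamma)(J(pi_cp) - J_f(pi_cp)) = E_{d^pi_cp}[T f - f]
   and Jensen's inequality under d^pi_cp <= C d^D bound J(pi_cp) - J_f*(pi_cp) by
   sqrt(C * 4 eps0) / (1 - gamma). *)

Section SeriesFacts.
Variable R : realType.
Implicit Types u : nat -> R.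

Lemma rseries_sumE u (l : R) : series u @ \oo --> l -> rseries_sum u = l.
Proof. by move=> h; apply: cvg_lim. Qed.

Lemma cvg_series_lincomb (I : finType) (c : I -> R) (u : I -> nat -> R) (l : I -> R) :
  (forall i, series (u i) @ \oo --> l i) ->
  series (fun t => \sum_i c i * u i t) @ \oo --> \sum_i c i * l i.
Proof.
move=> cvg_u.
have -> : series (fun t => \sum_i c i * u i t) = fun N => \sum_i c i * series (u i) N.
  apply: funext => N; rewrite seriesEnat /= exchange_big /=; apply: eq_bigr => i _.
  by rewrite seriesEnat /= mulr_sumr.
apply: cvg_big => [|i _]; first exact: pseudometric_normed_Zmodule.add_continuous.
exact: cvgMl_tmp.
Qed.

Lemma cvg_series_shift u (l : R) : series u @ \oo --> l ->
  series (fun t => u t.+1) @ \oo --> l - u 0%N.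
Proof.
move=> cvg_u.
have -> : series (fun t => u t.+1) = fun N => series u N.+1 - u 0%N.
  by apply: funext => N; rewrite !seriesEnat /= big_nat_recl //= addrC addKr.
by apply: cvgB; [rewrite (cvg_shiftS (series u)) | exact: cvg_cst].
Qed.

Lemma geometric_partial_sum_le (g : R) N : 0 <= g < 1 ->
  \sum_(0 <= k < N) g ^+ k <= (1 - g)^-1.
Proof.
move=> /andP[g0 g1].
have -> : \sum_(0 <= k < N) g ^+ k = series (geometric 1 g) N.
  by rewrite seriesEnat /=; apply: eq_bigr => k _; rewrite /geometric /= mul1r.
rewrite geometric_seriesE ?lt_eqF //= mul1r ler_pdivrMr ?subr_gt0 //.
by rewrite mulVf ?subr_eq0 ?gt_eqF // lerBlDr lerDl exprn_ge0.
Qed.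

Lemma cvg_series_geometric_dominated (g M : R) u : 0 <= g < 1 ->
  (forall t, 0 <= u t <= M * g ^+ t) -> series u @ \oo --> rseries_sum u.
Proof.
move=> hg hu.
have M0 : 0 <= M by have /andP[/le_trans h] := hu 0%N; rewrite expr0 mulr1; exact: h.
apply: (@nondecreasing_is_cvgn _ (series u)).
  by apply: nondecreasing_series => k _ _; case/andP: (hu k).
exists (M * (1 - g)^-1) => _ [N _ <-]; rewrite seriesEnat /=.
apply: (@le_trans _ _ (\sum_(0 <= k < N) M * g ^+ k)).
  by apply: ler_sum => k _; case/andP: (hu k).
by rewrite -mulr_sumr ler_wpM2l // geometric_partial_sum_le.
Qed.

Lemma rseries_sum_ge0 u : (forall t, 0 <= u t) -> cvgn (series u) -> 0 <= rseries_sum u.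
Proof.
move=> u0 cvg_u.
have := nondecreasing_cvgn_le (nondecreasing_series (fun k _ _ => u0 k)) cvg_u 0%N.
by rewrite /rseries_sum /= big_geq.
Qed.

End SeriesFacts.

Section Trajectories.
Variables (R : realType) (S A : finType) (P : S -> A -> {ffun S -> R}) (Rw : S -> A -> R).
Variables (gamma Rmax : R).
Hypothesis HP : is_kernel P.
Hypothesis HR : forall s a, 0 <= Rw s a <= Rmax.
Hypothesis Hg : 0 <= gamma < 1.
Implicit Types (pi : policy R S A) (mu nu : S * A -> R).

Definition is_sa_dist nu := (forall x, 0 <= nu x) /\ \sum_x nu x = 1.

Definition step_dist pi nu : S * A -> R :=
  fun y => \sum_x nu x * P x.1 x.2 y.1 * pi y.1 y.2.

Lemma sum_pairE (F : S * A -> R) : \sum_y F y = \sum_s \sum_a F (s, a).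
Proof. by rewrite pair_big; apply: eq_bigr => -[]. Qed.

Lemma sum_step_dist pi nu : is_policy pi -> \sum_y step_dist pi nu y = \sum_x nu x.
Proof.
move=> Hpi; rewrite /step_dist exchange_big; apply: eq_bigr => x _.
under eq_bigr do rewrite -mulrA.
rewrite -mulr_sumr sum_pairE.
suff -> : \sum_s \sum_a P x.1 x.2 (s, a).1 * pi (s, a).1 (s, a).2 = 1 by rewrite mulr1.
case: (HP x.1 x.2) => _ <-; apply: eq_bigr => s _ /=.
by rewrite -mulr_sumr (proj2 (Hpi s)) mulr1.
Qed.

Lemma step_dist_ge0 pi nu : is_policy pi -> (forall x, 0 <= nu x) ->
  forall y, 0 <= step_dist pi nu y.
Proof.
move=> Hpi nu0 y; apply: sumr_ge0 => x _.
by rewrite !mulr_ge0 //; [case: (HP x.1 x.2) | case: (Hpi y.1)].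
Qed.

Lemma sa_dist_is_dist pi mu : is_policy pi -> is_sa_dist mu ->
  forall t, is_sa_dist (sa_dist P pi mu t).
Proof.
move=> Hpi [mu0 mu1]; elim=> [|t [IH0 IH1]] //=; split.
  exact: (step_dist_ge0 Hpi IH0).
by rewrite (sum_step_dist _ Hpi) IH1.
Qed.

Lemma is_sa_dist_le1 nu : is_sa_dist nu -> forall x, nu x <= 1.
Proof. by case=> nu0 <- x; rewrite (bigD1 x) //= lerDl sumr_ge0. Qed.

Lemma sum_point_dist s a (F : S * A -> R) : \sum_x point_dist R s a x * F x = F (s, a).
Proof.
rewrite (bigD1 (s, a)) //= {1}/point_dist eqxx mul1r big1 ?addr0 //.
by move=> x /negbTE; rewrite /point_dist => ->; rewrite mul0r.
Qed.

Lemma point_dist_is_dist s a : is_sa_dist (point_dist R s a).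
Proof.
split=> [x|]; first by rewrite /point_dist; case: ifP.
by have := sum_point_dist s a (fun=> 1); under eq_bigr do rewrite mulr1.
Qed.

Lemma init_dist_is_dist d0 pi : is_dist_S d0 -> is_policy pi ->
  is_sa_dist (init_dist d0 pi).
Proof.
move=> [d00 d01] Hpi; split=> [x|].
  by rewrite /init_dist mulr_ge0 //; case: (Hpi x.1).
rewrite sum_pairE -d01; apply: eq_bigr => s _ /=.
by rewrite /init_dist /= -mulr_sumr (proj2 (Hpi s)) mulr1.
Qed.

Lemma sa_dist_mixture pi mu t y :
  sa_dist P pi mu t y = \sum_z mu z * sa_dist P pi (point_dist R z.1 z.2) t y.
Proof.
elim: t y => [|t IH] y /=.
  rewrite (bigD1 y) //= /point_dist -surjective_pairing eqxx mulr1 big1 ?addr0 //.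
  by move=> z zy; rewrite -surjective_pairing eq_sym (negbTE zy) mulr0.
under eq_bigr do rewrite IH !mulr_suml.
rewrite exchange_big; apply: eq_bigr => z _; rewrite mulr_sumr.
by apply: eq_bigr => x _; rewrite !mulrA.
Qed.

Lemma sa_distS pi mu t y : sa_dist P pi mu t.+1 y = sa_dist P pi (step_dist pi mu) t y.
Proof.
elim: t y => [|t IH] y //.
change (\sum_x sa_dist P pi mu t.+1 x * P x.1 x.2 y.1 * pi y.1 y.2 =
  \sum_x sa_dist P pi (step_dist pi mu) t x * P x.1 x.2 y.1 * pi y.1 y.2).
by apply: eq_bigr => x _; rewrite IH.
Qed.

Lemma exp_reward_mixture pi mu t :
  exp_reward P Rw pi mu t = \sum_z mu z * exp_reward P Rw pi (point_dist R z.1 z.2) t.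
Proof.
rewrite /exp_reward; under eq_bigr do rewrite sa_dist_mixture mulr_suml.
rewrite exchange_big; apply: eq_bigr => z _; rewrite mulr_sumr.
by apply: eq_bigr => x _; rewrite mulrA.
Qed.

Lemma exp_reward_point0 pi z : exp_reward P Rw pi (point_dist R z.1 z.2) 0 = Rw z.1 z.2.
Proof. by rewrite /exp_reward sum_point_dist. Qed.

Lemma exp_reward_pointS pi z t :
  exp_reward P Rw pi (point_dist R z.1 z.2) t.+1 =
  \sum_y P z.1 z.2 y.1 * pi y.1 y.2 * exp_reward P Rw pi (point_dist R y.1 y.2) t.
Proof.
transitivity (exp_reward P Rw pi (step_dist pi (point_dist R z.1 z.2)) t).
  by rewrite /exp_reward; apply: eq_bigr => x _; rewrite sa_distS.
rewrite exp_reward_mixture; apply: eq_bigr => y _; congr (_ * _).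
by rewrite /step_dist; under eq_bigr do rewrite -mulrA; rewrite sum_point_dist.
Qed.

Lemma exp_reward_bound pi mu t : is_policy pi -> is_sa_dist mu ->
  0 <= exp_reward P Rw pi mu t <= Rmax.
Proof.
move=> Hpi Hmu; case: (sa_dist_is_dist Hpi Hmu t) => nu0 nu1.
apply/andP; split.
  by apply: sumr_ge0 => x _; rewrite mulr_ge0 //; case/andP: (HR x.1 x.2).
apply: (@le_trans _ _ (\sum_x sa_dist P pi mu t x * Rmax)).
  by apply: ler_sum => x _; rewrite ler_wpM2l //; case/andP: (HR x.1 x.2).
by rewrite -mulr_suml nu1 mul1r.
Qed.

Lemma disc_reward_bound pi mu : is_policy pi -> is_sa_dist mu ->
  forall t, 0 <= gamma ^+ t * exp_reward P Rw pi mu t <= Rmax * gamma ^+ t.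
Proof.
move=> Hpi Hmu t; case/andP: (exp_reward_bound t Hpi Hmu) => r0 r1.
have gt0 : 0 <= gamma ^+ t by case/andP: Hg => g0 _; exact: exprn_ge0.
by rewrite mulr_ge0 //= mulrC ler_wpM2r.
Qed.

Lemma cvg_Qpi pi z : is_policy pi ->
  series (fun t => gamma ^+ t * exp_reward P Rw pi (point_dist R z.1 z.2) t) @ \oo -->
  Qpi P Rw gamma pi z.
Proof.
move=> Hpi; rewrite /Qpi ffunE.
exact: (cvg_series_geometric_dominated Hg (disc_reward_bound Hpi (point_dist_is_dist _ _))).
Qed.

(* Peel off the first reward and shift the series. *)
Lemma bellman_Qpi pi : is_policy pi ->
  bellman P Rw gamma pi (Qpi P Rw gamma pi) = Qpi P Rw gamma pi.
Proof.
move=> Hpi; apply/ffunP => z; rewrite ffunE.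
set c := fun y : S * A => gamma * (P z.1 z.2 y.1 * pi y.1 y.2).
have tail := cvg_series_shift (cvg_Qpi (z := z) Hpi).
have shift_e : (fun t => gamma ^+ t.+1 * exp_reward P Rw pi (point_dist R z.1 z.2) t.+1) =
   (fun t => \sum_y c y * (gamma ^+ t * exp_reward P Rw pi (point_dist R y.1 y.2) t)).
  apply: funext => t; rewrite exp_reward_pointS mulr_sumr; apply: eq_bigr => y _.
  by rewrite exprS /c; ring.
rewrite shift_e in tail; move/rseries_sumE: tail => tail.
rewrite (rseries_sumE (cvg_series_lincomb (c := c) (fun y => cvg_Qpi (z := y) Hpi))) in tail.
rewrite exp_reward_point0 expr0 mul1r in tail.
have -> : Qpi P Rw gamma pi z = Rw z.1 z.2 + \sum_y c y * Qpi P Rw gamma pi y.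
  by rewrite tail; ring.
congr (_ + _); rewrite mulr_sumr sum_pairE; apply: eq_bigr => s _ /=.
by rewrite /fpol !mulr_sumr; apply: eq_bigr => a _; rewrite /c /=; ring.
Qed.

End Trajectories.

Section PerformanceDifference.
Variables (R : realType) (S A : finType) (P : S -> A -> {ffun S -> R}) (Rw : S -> A -> R).
Variables (gamma Rmax : R) (d0 : {ffun S -> R}) (pi : policy R S A).
Hypothesis HP : is_kernel P.
Hypothesis HR : forall s a, 0 <= Rw s a <= Rmax.
Hypothesis Hg : 0 <= gamma < 1.
Hypothesis Hd0 : is_dist_S d0.
Hypothesis Hpi : is_policy pi.

Let nu t := sa_dist P pi (init_dist d0 pi) t.
Let nu_dist t : is_sa_dist (nu t) := sa_dist_is_dist HP Hpi (init_dist_is_dist Hd0 Hpi) t.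

Lemma Jpi_JfQ : Jpi P Rw gamma d0 pi = Jf d0 (Qpi P Rw gamma pi) pi.
Proof.
rewrite /Jpi.
have -> : (fun t => gamma ^+ t * exp_reward P Rw pi (init_dist d0 pi) t) =
    (fun t => \sum_z init_dist d0 pi z *
                (gamma ^+ t * exp_reward P Rw pi (point_dist R z.1 z.2) t)).
  by apply: funext => t; rewrite exp_reward_mixture mulr_sumr; apply: eq_bigr => z _; ring.
rewrite (rseries_sumE (cvg_series_lincomb (c := init_dist d0 pi)
  (fun z => cvg_Qpi HP HR Hg (z := z) Hpi))).
rewrite /Jf sum_pairE; apply: eq_bigr => s _; rewrite /fpol mulr_sumr.
by apply: eq_bigr => a _; rewrite /init_dist /=; ring.
Qed.

Lemma disc_occupancy_bound x t : 0 <= gamma ^+ t * nu t x <= 1 * gamma ^+ t.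
Proof.
have nu0 := (nu_dist t).1 x; have nu1 := is_sa_dist_le1 (nu_dist t) x.
have gt0 : 0 <= gamma ^+ t by case/andP: Hg => g0 _; exact: exprn_ge0.
by rewrite mulr_ge0 //= mul1r ler_piMr.
Qed.

Lemma cvg_disc_occupancy x :
  series (fun t => gamma ^+ t * nu t x) @ \oo -->
  rseries_sum (fun t => gamma ^+ t * nu t x).
Proof. exact: (cvg_series_geometric_dominated Hg (disc_occupancy_bound x)). Qed.

Lemma dpiE x :
  dpi P gamma d0 pi x = (1 - gamma) * rseries_sum (fun t => gamma ^+ t * nu t x).
Proof. by rewrite /dpi ffunE. Qed.

Lemma dpi_ge0 x : 0 <= dpi P gamma d0 pi x.
Proof.
rewrite dpiE mulr_ge0 //; first by case/andP: Hg => _ g1; rewrite subr_ge0 ltW.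
apply: rseries_sum_ge0; first by move=> t; case/andP: (disc_occupancy_bound x t).
by apply/cvg_ex; eexists; exact: cvg_disc_occupancy.
Qed.

Lemma sum_dpi : \sum_x dpi P gamma d0 pi x = 1.
Proof.
under eq_bigr do rewrite dpiE.
rewrite -mulr_sumr.
have cvg_sum := cvg_series_lincomb (c := fun=> 1) cvg_disc_occupancy.
have geom : (fun t => \sum_x (fun=> 1) x * (gamma ^+ t * nu t x)) = geometric 1 gamma.
  apply: funext => t; rewrite /geometric /=.
  under eq_bigr do rewrite mul1r.
  by rewrite -mulr_sumr (nu_dist t).2 mulr1 mul1r.
rewrite geom in cvg_sum.
have g1 : `|gamma| < 1 by case/andP: Hg => g0 g1; rewrite ger0_norm.
have := etrans (esym (rseries_sumE cvg_sum)) (rseries_sumE (cvg_geometric_series (a := 1) g1)).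
under eq_bigr do rewrite mul1r.
move=> ->; rewrite mul1r mulfV //.
by rewrite subr_eq0 eq_sym lt_eqF //; case/andP: Hg.
Qed.

Lemma sum_sa_dist_bellman (mu : S * A -> R) (f : qfun R S A) t :
  \sum_x sa_dist P pi mu t x * bellman P Rw gamma pi f x =
  exp_reward P Rw pi mu t + gamma * \sum_y sa_dist P pi mu t.+1 y * f y.
Proof.
rewrite /bellman; under eq_bigr do rewrite ffunE mulrDr.
rewrite big_split /=; congr (_ + _).
transitivity (\sum_x \sum_y
    gamma * (sa_dist P pi mu t x * P x.1 x.2 y.1 * pi y.1 y.2) * f y).
  apply: eq_bigr => x _; rewrite sum_pairE /fpol !mulr_sumr; apply: eq_bigr => s _.
  by rewrite !mulr_sumr; apply: eq_bigr => a _ /=; ring.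
rewrite exchange_big mulr_sumr; apply: eq_bigr => y _.
change (sa_dist P pi mu t.+1 y) with
  (\sum_x sa_dist P pi mu t x * P x.1 x.2 y.1 * pi y.1 y.2).
by rewrite mulr_suml mulr_sumr; apply: eq_bigr => x _; ring.
Qed.

Section BoundedValue.
Variables (f : qfun R S A) (V : R).
Hypothesis Hf : forall x, 0 <= f x <= V.

Let value t := \sum_x nu t x * f x.

Lemma cvg_disc_value0 : gamma ^+ N * value N @[N --> \oo] --> 0.
Proof.
have g1 : `|gamma| < 1 by case/andP: Hg => g0 g1; rewrite ger0_norm.
have hV : V * gamma ^+ N @[N --> \oo] --> 0.
  by rewrite -(mulr0 V); apply: cvgMl_tmp; exact: cvg_expr.
apply: (squeeze_cvgr _ (cvg_cst 0) hV); apply: nearW => N.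
have gN : 0 <= gamma ^+ N by case/andP: Hg => g0 _; exact: exprn_ge0.
have [nu0 nu1] := nu_dist N.
have v0 : 0 <= value N.
  by apply: sumr_ge0 => x _; rewrite mulr_ge0 //; case/andP: (Hf x).
have vV : value N <= V.
  apply: (@le_trans _ _ (\sum_x nu N x * V)).
    by apply: ler_sum => x _; rewrite ler_wpM2l //; case/andP: (Hf x).
  by rewrite -mulr_suml nu1 mul1r.
by rewrite mulr_ge0 //= mulrC ler_wpM2r.
Qed.

(* The discounted sum of the [nu t (T f - f)] telescopes, by [step]. *)
Lemma performance_difference :
  \sum_x dpi P gamma d0 pi x * (bellman P Rw gamma pi f x - f x) =
  (1 - gamma) * (Jpi P Rw gamma d0 pi - Jf d0 f pi).
Proof.
under eq_bigr do rewrite dpiE -mulrA.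
rewrite -mulr_sumr; congr (_ * _).
under eq_bigr do rewrite mulrC.
set h := fun x => bellman P Rw gamma pi f x - f x.
rewrite -(rseries_sumE (cvg_series_lincomb (c := h) cvg_disc_occupancy)).
apply: rseries_sumE.
have step t : \sum_x h x * (gamma ^+ t * nu t x) =
    gamma ^+ t * exp_reward P Rw pi (init_dist d0 pi) t +
    (gamma ^+ t.+1 * value t.+1 - gamma ^+ t * value t).
  have := sum_sa_dist_bellman (init_dist d0 pi) f t; rewrite -/(nu t) -/(nu t.+1) => bs.
  have -> : \sum_x h x * (gamma ^+ t * nu t x) =
      gamma ^+ t * (\sum_x nu t x * bellman P Rw gamma pi f x - value t).
    by rewrite /value -sumrB mulr_sumr; apply: eq_bigr => x _; rewrite /h; ring.
  by rewrite bs /value exprS; ring.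
have -> : series (fun t => \sum_x h x * (gamma ^+ t * nu t x)) =
  (fun N => series (fun t => gamma ^+ t * exp_reward P Rw pi (init_dist d0 pi) t) N +
            (gamma ^+ N * value N - value 0%N)).
  apply: funext => N; rewrite !seriesEnat /=; under eq_bigr do rewrite step.
  rewrite big_split /=; congr (_ + _).
  by rewrite (telescope_sumr (fun t => gamma ^+ t * value t)) // expr0 mul1r.
have -> : Jpi P Rw gamma d0 pi - Jf d0 f pi =
    rseries_sum (fun t => gamma ^+ t * exp_reward P Rw pi (init_dist d0 pi) t) +
    (0 - value 0%N).
  rewrite sub0r; congr (_ - _).
  rewrite /Jf /value sum_pairE; apply: eq_bigr => s _; rewrite /fpol mulr_sumr.
  by apply: eq_bigr => b _; rewrite /nu /= /init_dist /=; ring.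
apply: cvgD; first exact: (cvg_series_geometric_dominated Hg
  (disc_reward_bound HP HR Hg Hpi (init_dist_is_dist Hd0 Hpi))).
by apply: cvgB; [exact: cvg_disc_value0 | exact: cvg_cst].
Qed.

End BoundedValue.

End PerformanceDifference.

Section Concentrability.
Variable R : realType.

Lemma sqr_mean_le_mean_sqr (I : finType) (w h : I -> R) :
  (forall i, 0 <= w i) -> \sum_i w i = 1 ->
  (\sum_i w i * h i) ^+ 2 <= \sum_i w i * h i ^+ 2.
Proof.
move=> w0 w1; set m := \sum_i w i * h i.
have : 0 <= \sum_i w i * (h i - m) ^+ 2 by apply: sumr_ge0 => i _; rewrite mulr_ge0 ?sqr_ge0.
have -> : \sum_i w i * (h i - m) ^+ 2 =
    \sum_i w i * h i ^+ 2 - 2 * m * m + m ^+ 2 * \sum_i w i.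
  transitivity (\sum_i (w i * h i ^+ 2 - 2 * m * (w i * h i) + m ^+ 2 * w i)).
    by apply: eq_bigr => i _; ring.
  by rewrite big_split sumrB -!mulr_sumr.
by rewrite w1; lra.
Qed.

Lemma ler_sqrt_sqr (x y : R) : 0 <= y -> x ^+ 2 <= y -> x <= Num.sqrt y.
Proof. by move=> y0 xy; rewrite (le_trans (ler_norm x)) // -sqrtr_sqr ler_sqrt. Qed.

Variables (S A : finType) (P : S -> A -> {ffun S -> R}) (gamma : R).
Variables (d0 : {ffun S -> R}) (dD : {ffun S * A -> R}) (pi : policy R S A).
Hypothesis HdD : is_dist_SA dD.
Hypothesis Hconc : conc_finite P gamma d0 dD pi.
Hypothesis Hdpi0 : forall x, 0 <= dpi P gamma d0 pi x.
Hypothesis Hdpi1 : \sum_x dpi P gamma d0 pi x = 1.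

Lemma conc_ge0 : 0 <= conc P gamma d0 dD pi.
Proof.
apply: (big_ind (fun c => 0 <= c)) => // [c c' c0 _|x _]; first by rewrite le_max c0.
by rewrite divr_ge0 //; case: HdD.
Qed.

Lemma dpi_le_conc x : dpi P gamma d0 pi x <= conc P gamma d0 dD pi * dD x.
Proof.
have [dx0|dxn0] := eqVneq (dD x) 0; first by rewrite Hconc // dx0 mulr0.
rewrite -[leLHS](divfK dxn0) ler_wpM2r //; first by case: HdD.
exact: (le_bigmax _ (fun x => dpi P gamma d0 pi x / dD x) x).
Qed.

Lemma conc_bound (h : S * A -> R) :
  \sum_x dpi P gamma d0 pi x * h x <=
  Num.sqrt (conc P gamma d0 dD pi * \sum_x dD x * h x ^+ 2).
Proof.
apply: ler_sqrt_sqr.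
  by rewrite mulr_ge0 ?conc_ge0 // sumr_ge0 // => x _; rewrite mulr_ge0 ?sqr_ge0 //; case: HdD.
apply: (le_trans (sqr_mean_le_mean_sqr h Hdpi0 Hdpi1)).
rewrite mulr_sumr; apply: ler_sum => x _.
by rewrite mulrA ler_wpM2r ?sqr_ge0 ?dpi_le_conc.
Qed.

End Concentrability.

Section IidSamples.
Variables (R : realType) (T : finType) (w : T -> R) (n : nat).
Hypothesis w0 : forall x, 0 <= w x.
Hypothesis w1 : \sum_x w x = 1.
Implicit Types E : {ffun 'I_n -> T} -> bool.

Definition iid_prob E : R := \sum_(d | E d) \prod_i w (d i).

Lemma sum_ffun_prod (F : T -> R) :
  \sum_(d : {ffun 'I_n -> T}) \prod_i F (d i) = (\sum_x F x) ^+ n.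
Proof.
rewrite -(bigA_distr_bigA (fun (i : 'I_n) (x : T) => F x)) /=.
by rewrite prodr_const card_ord.
Qed.

Lemma iid_weight_ge0 (d : {ffun 'I_n -> T}) : 0 <= \prod_i w (d i).
Proof. exact: prodr_ge0. Qed.

Lemma iid_probC E : iid_prob E + iid_prob (fun d => ~~ E d) = 1.
Proof.
have total : \sum_(d : {ffun 'I_n -> T}) \prod_i w (d i) = 1.
  by rewrite sum_ffun_prod w1 expr1n.
by rewrite /iid_prob [RHS](esym total) [RHS](bigID E).
Qed.

Lemma le_iid_prob E E' : (forall d, E d -> E' d) -> iid_prob E <= iid_prob E'.
Proof.
move=> EE'; rewrite /iid_prob (big_mkcond E) (big_mkcond E') /=.
apply: ler_sum => d _; case: (boolP (E d)) => Ed; first by rewrite EE'.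
by case: (E' d); rewrite ?iid_weight_ge0.
Qed.

Lemma iid_prob0 : iid_prob (fun=> false) = 0.
Proof. by rewrite /iid_prob big_pred0. Qed.

Lemma iid_probU_le E E' : iid_prob (fun d => E d || E' d) <= iid_prob E + iid_prob E'.
Proof.
rewrite /iid_prob (big_mkcond (fun d => E d || E' d)) (big_mkcond E) (big_mkcond E').
rewrite -big_split /=; apply: ler_sum => d _; have := iid_weight_ge0 d.
by case: (E d); case: (E' d) => /= w_ge0; rewrite ?addr0 ?add0r ?lerDl.
Qed.

Lemma iid_prob_has_le (I : Type) (s : seq I) (E : I -> {ffun 'I_n -> T} -> bool) :
  iid_prob (fun d => has (E ^~ d) s) <= \sum_(i <- s) iid_prob (E i).
Proof.
elim: s => [|i s IH]; first by rewrite big_nil iid_prob0.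
by rewrite big_cons (le_trans (iid_probU_le _ _)) // lerD2l.
Qed.

Lemma iid_prob_ge_compl E B eps : iid_prob B <= eps ->
  (forall d, ~~ B d -> E d) -> 1 - eps <= iid_prob E.
Proof.
by move=> B_small BE; have := le_iid_prob BE; have := iid_probC B; lra.
Qed.

Lemma chernoff_bound (h : T -> R) lam t : 0 <= lam ->
  iid_prob (fun d => t <= \sum_i h (d i)) <=
  expR (- (lam * t)) * (\sum_x w x * expR (lam * h x)) ^+ n.
Proof.
move=> lam0.
have mgf : \sum_(d : {ffun 'I_n -> T}) \prod_i w (d i) * expR (lam * \sum_i h (d i)) =
    (\sum_x w x * expR (lam * h x)) ^+ n.
  rewrite -sum_ffun_prod; apply: eq_bigr => d _.
  by rewrite mulr_sumr expR_sum -big_split.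
rewrite -mgf mulr_sumr /iid_prob big_mkcond /=.
apply: ler_sum => d _; rewrite mulrCA -expRD.
case: ifP => ht; last by rewrite mulr_ge0 ?expR_ge0 ?iid_weight_ge0.
rewrite -[leLHS]mulr1 ler_wpM2l ?iid_weight_ge0 //.
by rewrite (le_trans _ (expR_ge1Dx _)) // lerDl addrC subr_ge0 ler_wpM2l.
Qed.

Lemma expR_le_quadratic (y : R) : y <= 1/2 -> expR y <= 1 + y + 2 * y ^+ 2.
Proof.
move=> y_le.
have e1 := expR_ge1Dx (- y).
have Ey : 0 < expR y := expR_gt0 y.
have EyN : expR y * expR (- y) = 1 := expRxMexpNx_1 y.
set q := 1 + y + 2 * y ^+ 2.
have q0 : 0 <= q by rewrite /q; nra.
have k1 : 1 <= (1 - y) * q by rewrite /q; nra.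
have k2 : expR y * (1 - y) <= 1 by rewrite -EyN; apply: ler_wpM2l; [exact: ltW | lra].
have : expR y * ((1 - y) * q) <= q by rewrite mulrA -[leRHS]mul1r ler_wpM2r.
by apply: le_trans; rewrite -[leLHS]mulr1 ler_wpM2l // ltW.
Qed.

Lemma bernstein_tail (h : T -> R) B mu t lam : 0 <= lam -> lam * B <= 1 / 8 ->
  (forall x, `|h x| <= B) ->
  \sum_x w x * h x = - mu -> \sum_x w x * h x ^+ 2 <= 4 * B * mu ->
  iid_prob (fun d => t <= \sum_i h (d i)) <=
  expR (- (lam * t)) * expR (n%:R * (lam * (8 * lam * B - 1) * mu)).
Proof.
move=> lam0 lamB hB mean var.
apply: (le_trans (chernoff_bound _ _ lam0)); rewrite ler_wpM2l ?expR_ge0 //.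
rewrite expRM_natl; apply: lerXn2r; rewrite ?nnegrE ?expR_ge0 //.
  by apply: sumr_ge0 => x _; rewrite mulr_ge0 ?expR_ge0.
have lamh x : lam * h x <= 1 / 2.
  have := hB x; rewrite ler_norml => /andP[_ hxB].
  by rewrite (le_trans (ler_wpM2l lam0 hxB)) //; lra.
apply: (@le_trans _ _ (\sum_x w x * (1 + lam * h x + 2 * (lam * h x) ^+ 2))).
  by apply: ler_sum => x _; rewrite ler_wpM2l ?expR_le_quadratic.
have -> : \sum_x w x * (1 + lam * h x + 2 * (lam * h x) ^+ 2) =
    \sum_x w x + lam * \sum_x w x * h x + 2 * lam ^+ 2 * \sum_x w x * h x ^+ 2.
  by rewrite !mulr_sumr -!big_split /=; apply: eq_bigr => x _; ring.
rewrite w1 mean (le_trans _ (expR_ge1Dx _)) //.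
have := ler_wpM2l (mulr_ge0 (ler0n _ 2) (sqr_ge0 lam)) var.
nra.
Qed.

End IidSamples.

Section ExcessLoss.
Variables (R : realType) (S A : finType) (P : S -> A -> {ffun S -> R}) (Rw : S -> A -> R).
Variables (gamma Rmax V : R) (dD : {ffun S * A -> R}) (pi : policy R S A).
Hypothesis HP : is_kernel P.
Hypothesis HR : forall s a, 0 <= Rw s a <= Rmax.
Hypothesis Hg : 0 <= gamma < 1.
Hypothesis HV : Rmax = (1 - gamma) * V.
Hypothesis HdD : is_dist_SA dD.
Hypothesis Hpi : is_policy pi.
Implicit Types (f g : qfun R S A) (x : sample S A).

Definition sample_weight x : R := dD (x.1.1, x.1.2) * P x.1.1 x.1.2 x.2.

Definition sq_dist f g : R := \sum_z dD z * (f z - g z) ^+ 2.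

Definition target f x : R := Rw x.1.1 x.1.2 + gamma * fpol f x.2 pi.

Definition excess_loss f g x : R :=
  (f (x.1.1, x.1.2) - target f x) ^+ 2 - (g (x.1.1, x.1.2) - target f x) ^+ 2.

Lemma emp_loss_diff n (data : {ffun 'I_n -> sample S A}) f g :
  emp_loss Rw gamma data f f pi - emp_loss Rw gamma data g f pi =
  n%:R^-1 * \sum_i excess_loss f g (data i).
Proof.
rewrite /emp_loss -mulrBr -sumrB; congr (_ * _); apply: eq_bigr => i _.
by rewrite /excess_loss /target !opprD !addrA.
Qed.

Lemma sum_sampleE (F : sample S A -> R) : \sum_x F x = \sum_z \sum_s F (z, s).
Proof. by rewrite pair_big; apply: eq_bigr => -[]. Qed.

Lemma sample_weight_ge0 x : 0 <= sample_weight x.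
Proof. by rewrite mulr_ge0 //; [case: HdD | case: (HP x.1.1 x.1.2)]. Qed.

Lemma sum_sample_weight_marginal (G : S * A -> R) :
  \sum_x sample_weight x * G x.1 = \sum_z dD z * G z.
Proof.
rewrite sum_sampleE; apply: eq_bigr => z _ /=.
rewrite /sample_weight /= -surjective_pairing.
under eq_bigr do rewrite mulrAC.
by rewrite -mulr_sumr (proj2 (HP z.1 z.2)) mulr1.
Qed.

Lemma sum_sample_weight : \sum_x sample_weight x = 1.
Proof.
have := sum_sample_weight_marginal (fun=> 1).
by under eq_bigr do rewrite mulr1; under [in RHS]eq_bigr do rewrite mulr1; case: HdD => _ ->.
Qed.

Lemma mean_excess_loss f g :
  \sum_x sample_weight x * excess_loss f g x =
  \sum_z dD z * ((f z - g z) * (f z + g z - 2 * bellman P Rw gamma pi f z)).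
Proof.
rewrite sum_sampleE; apply: eq_bigr => z _ /=.
rewrite /sample_weight /excess_loss /target /= -surjective_pairing.
under eq_bigr do rewrite -mulrA.
rewrite -mulr_sumr; congr (_ * _).
transitivity (\sum_s P z.1 z.2 s * ((f z - g z) * (f z + g z - 2 * Rw z.1 z.2)
                                    + (- 2 * (f z - g z) * gamma) * fpol f s pi)).
  by apply: eq_bigr => s _; congr (_ * _); ring.
under eq_bigr do rewrite mulrDr.
rewrite big_split /= -mulr_suml (proj2 (HP z.1 z.2)) mul1r.
under eq_bigr do rewrite mulrCA; rewrite -mulr_sumr /bellman ffunE; ring.
Qed.

Lemma fpol_bound f s : (forall z, 0 <= f z <= V) -> 0 <= fpol f s pi <= V.
Proof.
move=> Hf; case: (Hpi s) => pi0 pi1; apply/andP; split.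
  by apply: sumr_ge0 => a _; rewrite mulr_ge0 //; case/andP: (Hf (s, a)).
apply: (@le_trans _ _ (\sum_a pi s a * V)).
  by apply: ler_sum => a _; rewrite ler_wpM2l //; case/andP: (Hf (s, a)).
by rewrite -mulr_suml pi1 mul1r.
Qed.

Lemma target_bound f x : (forall z, 0 <= f z <= V) -> 0 <= target f x <= V.
Proof.
move=> Hf; case/andP: (fpol_bound x.2 Hf) => v0 vV; case/andP: (HR x.1.1 x.1.2) => r0 rM.
case/andP: Hg => g0 g1; rewrite /target addr_ge0 ?mulr_ge0 //=.
have := ler_wpM2l g0 vV; move: rM; rewrite HV; lra.
Qed.

Lemma sqr_diff_abs_le (a b y : R) : 0 <= a <= V -> 0 <= b <= V -> 0 <= y <= V ->
  `|(a - y) ^+ 2 - (b - y) ^+ 2| <= V ^+ 2.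
Proof.
move=> /andP[a0 aV] /andP[b0 bV] /andP[y0 yV].
have h1 : 0 <= (V - (a - y)) * (V + (a - y)) by apply: mulr_ge0; lra.
have h2 : 0 <= (V - (b - y)) * (V + (b - y)) by apply: mulr_ge0; lra.
have h3 := sqr_ge0 (a - y); have h4 := sqr_ge0 (b - y).
rewrite ler_norml; apply/andP; split; nra.
Qed.

Lemma sqr_diff_sqr_le (a b y : R) : 0 <= a <= V -> 0 <= b <= V -> 0 <= y <= V ->
  ((a - y) ^+ 2 - (b - y) ^+ 2) ^+ 2 <= 4 * V ^+ 2 * (a - b) ^+ 2.
Proof.
move=> /andP[a0 aV] /andP[b0 bV] /andP[y0 yV].
have -> : ((a - y) ^+ 2 - (b - y) ^+ 2) ^+ 2 = (a - b) ^+ 2 * (a + b - 2 * y) ^+ 2 by ring.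
rewrite mulrC ler_wpM2r ?sqr_ge0 //.
have : 0 <= (2 * V - (a + b - 2 * y)) * (2 * V + (a + b - 2 * y)) by apply: mulr_ge0; lra.
nra.
Qed.

Section BoundedFunctions.
Variables f g : qfun R S A.
Hypotheses (Hf : forall z, 0 <= f z <= V) (g_bound : forall z, 0 <= g z <= V).

Lemma excess_loss_abs_le x : `|excess_loss f g x| <= V ^+ 2.
Proof. exact: sqr_diff_abs_le (Hf _) (g_bound _) (target_bound x Hf). Qed.

Lemma second_moment_excess_loss :
  \sum_x sample_weight x * excess_loss f g x ^+ 2 <= 4 * V ^+ 2 * sq_dist f g.
Proof.
apply: (@le_trans _ _ (\sum_x sample_weight x * (4 * V ^+ 2 * (f x.1 - g x.1) ^+ 2))).
  apply: ler_sum => x _; rewrite ler_wpM2l ?sample_weight_ge0 // [x.1]surjective_pairing.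
  exact: sqr_diff_sqr_le (Hf _) (g_bound _) (target_bound x Hf).
rewrite (sum_sample_weight_marginal (fun z => 4 * V ^+ 2 * (f z - g z) ^+ 2)).
rewrite /sq_dist mulr_sumr.
by under eq_bigr do rewrite mulrCA.
Qed.

End BoundedFunctions.

End ExcessLoss.

Section SampleEvents.
Variables (R : realType) (S A : finType) (P : S -> A -> {ffun S -> R}) (Rw : S -> A -> R).
Variables (gamma Rmax V lg eps0 : R) (dD : {ffun S * A -> R}) (n : nat).
Hypothesis HP : is_kernel P.
Hypothesis HR : forall s a, 0 <= Rw s a <= Rmax.
Hypothesis Hg : 0 <= gamma < 1.
Hypothesis HV : Rmax = (1 - gamma) * V.
Hypothesis HdD : is_dist_SA dD.
Hypothesis Hn : (0 < n)%N.
Hypothesis Hlg : 0 <= lg.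
Hypothesis Heps : eps0 = 32 * V ^+ 2 * lg / n%:R.

Let w := sample_weight P dD.
Let w0 := sample_weight_ge0 HP HdD.
Let w1 := sum_sample_weight HP HdD.

Lemma n_eps0E : n%:R * eps0 = 32 * V ^+ 2 * lg.
Proof. by rewrite Heps; field; rewrite pnatr_eq0 -lt0n. Qed.

Lemma prob_Q_rejected pi (g : qfun R S A) : is_policy pi ->
  (forall z, 0 <= Qpi P Rw gamma pi z <= V) -> (forall z, 0 <= g z <= V) ->
  iid_prob w (fun d : {ffun 'I_n -> sample S A} =>
    n%:R * eps0 < \sum_i excess_loss Rw gamma pi (Qpi P Rw gamma pi) g (d i))
  <= expR (- (lg + lg)).
Proof.
move=> Hpi HQ Hgb; set Q := Qpi P Rw gamma pi.
have abs_le x := excess_loss_abs_le HR Hg HV Hpi HQ Hgb x.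
have [V0|Vn0] := eqVneq V 0.
  apply: (@le_trans _ _ (iid_prob w (fun _ : {ffun 'I_n -> _} => false))).
    apply: (le_iid_prob w0) => d /=; rewrite n_eps0E V0 expr2 !mulr0 mul0r big1 ?ltxx // => i _.
    by have := abs_le (d i); rewrite V0 expr2 mulr0 normr_le0 => /eqP.
  by rewrite iid_prob0 expR_ge0.
have V2 : 0 < V ^+ 2 by rewrite exprn_even_gt0.
have mean : \sum_x w x * excess_loss Rw gamma pi Q g x = - sq_dist dD Q g.
  rewrite mean_excess_loss // (bellman_Qpi HP HR Hg Hpi) /sq_dist -sumrN.
  by apply: eq_bigr => z _; ring.
have var := second_moment_excess_loss HP HR Hg HV HdD Hpi HQ Hgb.
apply: (le_trans (le_iid_prob w0 (E' := fun d =>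
  n%:R * eps0 <= \sum_i excess_loss Rw gamma pi Q g (d i)) (fun d => @ltW _ _ _ _))).
apply: (le_trans (bernstein_tail n w0 w1 (n%:R * eps0) (lam := (8 * V ^+ 2)^-1) _ _ abs_le mean var)).
- by rewrite invr_ge0 mulr_ge0 // ltW.
- by rewrite invfM -mulrA mulVf ?gt_eqF // mulr1 div1r.
have V2n0 : V ^+ 2 != 0 by rewrite gt_eqF.
have -> : 8 / (8 * V ^+ 2) * V ^+ 2 - 1 = 0 by field.
rewrite mulr0 mul0r mulr0 expR0 mulr1 ler_expR lerN2 n_eps0E.
have -> : (8 * V ^+ 2)^-1 * (32 * V ^+ 2 * lg) = (lg + lg) + (lg + lg) by field.
by rewrite lerDl addr_ge0.
Qed.

Lemma prob_bellman_error_undetected pi (f : qfun R S A) : is_policy pi ->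
  (forall z, 0 <= f z <= V) -> (forall z, 0 <= bellman P Rw gamma pi f z <= V) ->
  iid_prob w (fun d : {ffun 'I_n -> sample S A} =>
    (4 * eps0 < sq_dist dD f (bellman P Rw gamma pi f)) &&
    (\sum_i excess_loss Rw gamma pi f (bellman P Rw gamma pi f) (d i) <= n%:R * eps0))
  <= expR (- (lg + lg)).
Proof.
move=> Hpi Hf HTf; set g := bellman P Rw gamma pi f.
have [mu_small|mu_large] := leP (sq_dist dD f g) (4 * eps0).
  apply: (@le_trans _ _ (iid_prob w (fun _ : {ffun 'I_n -> _} => false))).
    exact: (le_iid_prob w0).
  by rewrite iid_prob0 expR_ge0.
have [V0|Vn0] := eqVneq V 0.
  have fg z : f z = g z.
    have /andP[f0 fV] := Hf z; have /andP[g0 gV] := HTf z.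
    by apply/eqP; rewrite eq_le (le_trans fV) ?(le_trans gV) // V0.
  move: mu_large; rewrite Heps V0 /sq_dist big1 => [|z _]; last by rewrite fg subrr expr2 !mulr0.
  by rewrite expr2 !mulr0 !mul0r mulr0 ltxx.
have V2 : 0 < V ^+ 2 by rewrite exprn_even_gt0.
have V2n0 : V ^+ 2 != 0 by rewrite gt_eqF.
have abs_le x : `|- excess_loss Rw gamma pi f g x| <= V ^+ 2.
  by rewrite normrN (excess_loss_abs_le HR Hg HV Hpi Hf HTf x).
have mean : \sum_x w x * (- excess_loss Rw gamma pi f g x) = - sq_dist dD f g.
  rewrite /w; under eq_bigr do rewrite mulrN.
  by rewrite sumrN mean_excess_loss // /sq_dist; congr (- _); apply: eq_bigr => z _; ring.
have var : \sum_x w x * (- excess_loss Rw gamma pi f g x) ^+ 2 <= 4 * V ^+ 2 * sq_dist dD f g.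
  under eq_bigr do rewrite sqrrN.
  exact: (second_moment_excess_loss HP HR Hg HV HdD Hpi Hf HTf).
apply: (le_trans (le_iid_prob w0 (E' := fun d =>
  - (n%:R * eps0) <= \sum_i - excess_loss Rw gamma pi f g (d i)) _)).
  by move=> d /=; rewrite sumrN lerN2.
apply: (le_trans (bernstein_tail n w0 w1 (- (n%:R * eps0)) (lam := (16 * V ^+ 2)^-1) _ _ abs_le mean var)).
- by rewrite invr_ge0 mulr_ge0 // ltW.
- by rewrite invfM -mulrA mulVf ?gt_eqF // mulr1 div1r ler_pV2 ?inE ?unitfE //; lra.
have -> : (16 * V ^+ 2)^-1 * (8 * (16 * V ^+ 2)^-1 * V ^+ 2 - 1) = - (32 * V ^+ 2)^-1 by field.
have mu_n : 4 * (n%:R * eps0) <= n%:R * sq_dist dD f g.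
  by rewrite mulrCA ler_wpM2l ?ler0n // ltW.
rewrite -expRD ler_expR.
have -> : - ((16 * V ^+ 2)^-1 * - (n%:R * eps0)) = lg + lg by rewrite n_eps0E; field.
have : n%:R * (- (32 * V ^+ 2)^-1 * sq_dist dD f g) <= - (4 * lg).
  have -> : 4 * lg = (32 * V ^+ 2)^-1 * (4 * (n%:R * eps0)) by rewrite n_eps0E; field.
  rewrite mulrA (mulrC n%:R) -mulrA mulNr lerN2 ler_wpM2l // invr_ge0 mulr_ge0 //.
  exact: ltW.
lra.
Qed.

End SampleEvents.

Lemma value_gap_le_bellman_error (R : realType) (S A : finType)
    (P : S -> A -> {ffun S -> R}) (Rw : S -> A -> R) (gamma Rmax V : R)
    (d0 : {ffun S -> R}) (dD : {ffun S * A -> R}) (pi : policy R S A) (f : qfun R S A) :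
  is_kernel P -> (forall s a, 0 <= Rw s a <= Rmax) -> 0 <= gamma < 1 ->
  is_dist_S d0 -> is_dist_SA dD -> is_policy pi -> conc_finite P gamma d0 dD pi ->
  (forall z, 0 <= f z <= V) ->
  (1 - gamma) * (Jpi P Rw gamma d0 pi - Jf d0 f pi) <=
  Num.sqrt (conc P gamma d0 dD pi * sq_dist dD f (bellman P Rw gamma pi f)).
Proof.
move=> HP HR Hg Hd0 HdD Hpi Hconc Hf.
rewrite -(performance_difference HP HR Hg Hd0 Hpi Hf).
have -> : sq_dist dD f (bellman P Rw gamma pi f) =
    \sum_x dD x * (bellman P Rw gamma pi f x - f x) ^+ 2.
  by apply: eq_bigr => x _; rewrite -sqrrN opprB.
exact: conc_bound HdD Hconc (dpi_ge0 HP Hg Hd0 Hpi) (sum_dpi HP Hg Hd0 Hpi) _.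
Qed.

Section VersionSpace.
Variables (R : realType) (S A : finType) (Rw : S -> A -> R) (gamma : R).
Variables (F : seq (qfun R S A)) (n : nat) (data : {ffun 'I_n -> sample S A}).
Hypothesis Hn : (0 < n)%N.

Lemma emp_err_le pi (f : qfun R S A) eps : 0 <= eps ->
  (forall g, g \in F -> \sum_i excess_loss Rw gamma pi f g (data i) <= n%:R * eps) ->
  emp_err Rw gamma F data f pi <= eps.
Proof.
move=> eps0 small; rewrite /emp_err big_seq; apply: bigmax_le => // g gF.
by rewrite emp_loss_diff ler_pdivrMl ?ltr0n // small.
Qed.

Lemma le_emp_err pi (f g : qfun R S A) : g \in F ->
  \sum_i excess_loss Rw gamma pi f g (data i) <= n%:R * emp_err Rw gamma F data f pi.
Proof.
move=> gF; rewrite -ler_pdivrMl ?ltr0n // -emp_loss_diff.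
exact: (le_bigmax_seq 0 g xpredT _ gF).
Qed.

End VersionSpace.

Lemma bigmin_seq_attained (R : realType) (I : eqType) (s : seq I) (p : pred I) (F : I -> R) :
  has p s -> exists2 y, (y \in s) && p y &
    (\big[mine/+oo]_(i <- s | p i) (F i)%:E = (F y)%:E)%E.
Proof.
elim: s => // a s IH /=; rewrite big_cons.
case pa: (p a) => /= hs; last first.
  by case: (IH hs) => y /andP[ys py] ->; exists y; rewrite // inE ys orbT.
case: (boolP (has p s)) => hs'; last first.
  by rewrite big_hasC // min_l ?leey //; exists a; rewrite ?inE ?eqxx.
case: (IH hs') => y /andP[ys py] ->; case: leP => _.
  by exists a; rewrite ?inE ?eqxx.
by exists y; rewrite // inE ys orbT.
Qed.

Lemma union_bound_le (R : realType) (a b delta : R) : 1 <= a -> 2 <= b -> 0 < delta < 1 ->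
  (a * b + a) * (a * b / delta * (a * b / delta))^-1 <= delta.
Proof.
move=> a1 b2 /andP[dl0 dl1].
have ab2 : 2 <= a * b by apply: (le_trans b2); rewrite -[leLHS]mul1r ler_wpM2r //; lra.
have -> : (a * b + a) * (a * b / delta * (a * b / delta))^-1 =
    delta ^+ 2 * (a * b + a) / (a * b) ^+ 2.
  by field; rewrite !gt_eqF //; lra.
rewrite ler_pdivrMr; last by apply: exprn_gt0; lra.
have a_ab : a <= a * b by rewrite -[leLHS]mulr1 ler_wpM2l //; lra.
have ab_sq : a * b + a <= (a * b) ^+ 2.
  by rewrite expr2 (le_trans (lerD (lexx _) a_ab)) // -mulr2n -mulr_natl ler_wpM2r //; lra.
apply: (le_trans (ler_wpM2l (sqr_ge0 delta) ab_sq)).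
by rewrite ler_wpM2r ?sqr_ge0 // expr2 -[leRHS]mulr1 ler_wpM2l; lra.
Qed.

Section Regret.
Variables (R : realType) (S A : finType).
Variables (P : S -> A -> {ffun S -> R}) (Rw : S -> A -> R) (Rmax gamma : R).
Variables (d0 : {ffun S -> R}) (dD : {ffun S * A -> R}).
Variables (F : seq (qfun R S A)) (Pi : seq (policy R S A)) (pi_cp : policy R S A).
Variables (n : nat) (delta : R) (pi_hat : {ffun 'I_n -> sample S A} -> policy R S A).
Hypothesis HP : is_kernel P.
Hypothesis HR : forall s a, 0 <= Rw s a <= Rmax.
Hypothesis Hg : 0 <= gamma < 1.
Hypothesis Hd0 : is_dist_S d0.
Hypothesis HdD : is_dist_SA dD.
Hypothesis HPi : forall pi, pi \in Pi -> is_policy pi.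
Hypothesis HF : forall f, f \in F -> forall x, 0 <= f x <= Rmax / (1 - gamma).
Hypothesis Hcp : pi_cp \in Pi.
Hypothesis Hconc : conc_finite P gamma d0 dD pi_cp.
Hypothesis Hcompl : forall f, f \in F -> bellman P Rw gamma pi_cp f \in F.
Hypothesis Hreal : forall pi, pi \in Pi -> Qpi P Rw gamma pi \in F.
Hypothesis Hn : (0 < n)%N.
Hypothesis Hdelta : 0 < delta < 1.

Local Notation V := (Rmax / (1 - gamma)).
Local Notation lg := (ln ((size F)%:R * (size Pi)%:R / delta)).
Local Notation eps0 := (32 * V ^+ 2 * lg / n%:R).
Local Notation T := (bellman P Rw gamma pi_cp).

Hypothesis Hhat : forall data, pi_hat data \in Pi /\
  forall pi, pi \in Pi ->
    (Jminus_VS Rw gamma d0 F eps0 data pi <= Jminus_VS Rw gamma d0 F eps0 data (pi_hat data))%E.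

Definition Q_rejected (d : {ffun 'I_n -> sample S A}) :=
  has (fun pi => has (fun g =>
    n%:R * eps0 < \sum_i excess_loss Rw gamma pi (Qpi P Rw gamma pi) g (d i)) F) Pi.

Definition bellman_error_undetected (d : {ffun 'I_n -> sample S A}) :=
  has (fun f => (4 * eps0 < sq_dist dD f (T f)) &&
    (\sum_i excess_loss Rw gamma pi_cp f (T f) (d i) <= n%:R * eps0)) F.

Lemma subr_gamma_gt0 : 0 < 1 - gamma.
Proof. by case/andP: Hg => _; rewrite subr_gt0. Qed.

Lemma Rmax_eq : Rmax = (1 - gamma) * V.
Proof. by field; rewrite gt_eqF ?subr_gamma_gt0. Qed.

Lemma size_F_ge1 : 1 <= (size F)%:R :> R.
Proof. by rewrite ler1n; have := Hreal Hcp; case: (F). Qed.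

Lemma size_Pi_ge1 : 1 <= (size Pi)%:R :> R.
Proof. by rewrite ler1n; move: Hcp; case: (Pi). Qed.

Lemma lg_ge0 : 0 <= lg.
Proof.
have [d0' d1] := andP Hdelta; apply: ln_ge0.
rewrite ler_pdivlMr // mul1r (le_trans (ltW d1)) //.
by rewrite mulr_ege1 ?size_F_ge1 ?size_Pi_ge1.
Qed.

(* Union bound over the [|Pi| |F| + |F|] elementary events, each of probability
   at most [(delta / (|F| |Pi|))^2]. *)
Lemma prob_bad_event_le : (1 < size Pi)%N ->
  iid_prob (sample_weight P dD)
    (fun d => Q_rejected d || bellman_error_undetected d) <= delta.
Proof.
move=> Pi2; have [dl0 dl1] := andP Hdelta.
have w0 := sample_weight_ge0 HP HdD.
have HV := Rmax_eq.
set a := (size F)%:R : R; set b := (size Pi)%:R : R.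
have a1 : 1 <= a := size_F_ge1.
have b2 : 2 <= b by rewrite /b ler_nat.
set q := expR (- (lg + lg)).
have qE : q = (a * b / delta * (a * b / delta))^-1.
  by rewrite /q expRN expRD lnK // posrE divr_gt0 // mulr_gt0 //; lra.
apply: (le_trans (iid_probU_le w0 _ _)).
apply: (@le_trans _ _ (\sum_(pi <- Pi) \sum_(g <- F) q + \sum_(f <- F) q)).
  apply: lerD; apply: (le_trans (iid_prob_has_le w0 _ _)).
    rewrite big_seq [leRHS]big_seq; apply: ler_sum => pi piPi.
    apply: (le_trans (iid_prob_has_le w0 _ _)).
    rewrite big_seq [leRHS]big_seq; apply: ler_sum => g gF.
    exact: (prob_Q_rejected HP HR Hg HV HdD Hn lg_ge0 erefl (HPi piPi)
      (HF (Hreal piPi)) (HF gF)).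
  rewrite big_seq [leRHS]big_seq; apply: ler_sum => f fF.
  exact: (prob_bellman_error_undetected HP HR Hg HV HdD Hn erefl (HPi Hcp)
    (HF fF) (HF (Hcompl fF))).
rewrite !big_const_seq !count_predT !iter_addr_0 -(mulr_natr q) -/a -(mulr_natr (q * a)) -/b.
have -> : q * a * b + q * a = (a * b + a) * q by ring.
by rewrite qE union_bound_le.
Qed.

Lemma V_ge0 : 0 <= V.
Proof.
have [s _|noS] := pickP (fun _ : S => true); last first.
  by case: Hd0 => _; rewrite big_pred0 // => /eqP; rewrite eq_sym oner_eq0.
have [a _|noA] := pickP (fun _ : A => true); last first.
  by case: (HPi Hcp s) => _; rewrite big_pred0 // => /eqP; rewrite eq_sym oner_eq0.
by case/andP: (HF (Hreal Hcp) (s, a)) => /le_trans; apply.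
Qed.

Lemma sqrt_conc_eps0_le :
  Num.sqrt (conc P gamma d0 dD pi_cp * (4 * eps0)) <=
  12 * V * Num.sqrt (conc P gamma d0 dD pi_cp * lg / n%:R).
Proof.
set C := conc P gamma d0 dD pi_cp.
have C0 : 0 <= C := conc_ge0 HdD (dpi_ge0 HP Hg Hd0 (HPi Hcp)).
have -> : C * (4 * eps0) = (128 * V ^+ 2) * (C * lg / n%:R).
  by field; rewrite pnatr_eq0 -lt0n Hn gt_eqF ?subr_gamma_gt0.
have V2_ge0 : 0 <= 128 * V ^+ 2 by rewrite mulr_ge0 // sqr_ge0.
have sqrt128 : Num.sqrt (128 * V ^+ 2) <= 12 * V.
  have V12 : 0 <= 12 * V by rewrite mulr_ge0 ?V_ge0.
  rewrite -[leRHS]ger0_norm // -sqrtr_sqr ler_sqrt ?sqr_ge0 //.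
  have -> : (12 * V) ^+ 2 = 144 * V ^+ 2 by ring.
  by have := sqr_ge0 V; lra.
have := ler_wpM2r (sqrtr_ge0 (C * lg / n%:R)) sqrt128.
by rewrite [in X in _ -> X]sqrtrM.
Qed.

Lemma eps0_ge0 : 0 <= eps0.
Proof. by rewrite divr_ge0 // mulr_ge0 ?lg_ge0 // mulr_ge0 // sqr_ge0. Qed.

Lemma version_space_minimizer d : ~~ Q_rejected d ->
  exists2 fs, (fs \in F) && (emp_err Rw gamma F d fs pi_cp <= eps0) &
    Jf d0 fs pi_cp <= Jpi P Rw gamma d0 (pi_hat d).
Proof.
move=> /hasPn Q_ok.
have Q_in_VS pi : pi \in Pi -> emp_err Rw gamma F d (Qpi P Rw gamma pi) pi <= eps0.
  move=> piPi; apply: (emp_err_le Hn eps0_ge0) => g gF.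
  by move/hasPn: (Q_ok pi piPi) => /(_ g gF); rewrite -leNgt.
have [hatPi hat_max] := Hhat d.
have [fs fs_VS J_fs] : exists2 fs, (fs \in F) && (emp_err Rw gamma F d fs pi_cp <= eps0) &
    Jminus_VS Rw gamma d0 F eps0 d pi_cp = (Jf d0 fs pi_cp)%:E.
  apply: bigmin_seq_attained; apply/hasP.
  by exists (Qpi P Rw gamma pi_cp); rewrite ?Hreal ?Q_in_VS.
exists fs => //; rewrite (Jpi_JfQ d0 HP HR Hg (HPi hatPi)) -lee_fin -J_fs.
rewrite (le_trans (hat_max _ Hcp)) //.
exact: ge_bigmin_seq (Hreal hatPi) (Q_in_VS _ hatPi).
Qed.

Lemma regret_le_on_good_event d :
  ~~ Q_rejected d -> ~~ bellman_error_undetected d ->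
  Jpi P Rw gamma d0 pi_cp - Jpi P Rw gamma d0 (pi_hat d) <=
  12 * (V / (1 - gamma)) * Num.sqrt (conc P gamma d0 dD pi_cp * lg / n%:R).
Proof.
move=> /version_space_minimizer[fs /andP[fsF fs_VS] J_fs_le] /hasPn err_ok.
have g1 := subr_gamma_gt0.
have err_fs : sq_dist dD fs (T fs) <= 4 * eps0.
  move: (err_ok fs fsF); rewrite negb_and -leNgt => /orP[//|]; rewrite -ltNge => big.
  move/le_trans/(_ (ler_wpM2l (ler0n _ n) fs_VS)): (le_emp_err Rw gamma d Hn pi_cp fs (Hcompl fsF)).
  by rewrite leNgt big.
set C := conc P gamma d0 dD pi_cp.
have C0 : 0 <= C := conc_ge0 HdD (dpi_ge0 HP Hg Hd0 (HPi Hcp)).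
have gap : (1 - gamma) * (Jpi P Rw gamma d0 pi_cp - Jf d0 fs pi_cp) <=
    12 * V * Num.sqrt (C * lg / n%:R).
  apply: (le_trans (value_gap_le_bellman_error HP HR Hg Hd0 HdD (HPi Hcp) Hconc (HF fsF))).
  have C_eps0 : 0 <= C * (4 * eps0) by rewrite mulr_ge0 // mulr_ge0 // eps0_ge0.
  apply: le_trans sqrt_conc_eps0_le; rewrite ler_sqrt //.
  by move: (ler_wpM2l C0 err_fs).
have -> : 12 * (V / (1 - gamma)) * Num.sqrt (C * lg / n%:R) =
    12 * V * Num.sqrt (C * lg / n%:R) / (1 - gamma) by field; exact: lt0r_neq0.
rewrite ler_pdivlMr // mulrC; apply: le_trans gap.
by apply: ler_wpM2l; [exact: ltW | rewrite lerD2l lerN2].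
Qed.

Lemma regret_bound_whp :
  1 - delta <= prob_data P dD (fun data =>
    Jpi P Rw gamma d0 pi_cp - Jpi P Rw gamma d0 (pi_hat data) <=
    12 * (V / (1 - gamma)) * Num.sqrt (conc P gamma d0 dD pi_cp * lg / n%:R)).
Proof.
have w0 := sample_weight_ge0 HP HdD; have w1 := sum_sample_weight HP HdD.
case: (leqP (size Pi) 1) => [Pi_le1|Pi_gt1].
  apply: (iid_prob_ge_compl w0 w1 (B := fun=> false)).
    by rewrite iid_prob0; case/andP: Hdelta => /ltW.
  move=> d _; have -> : pi_hat d = pi_cp.
    by move: Pi_le1 (Hhat d).1 Hcp; case: (Pi) => [|p [|]] //= _; rewrite !inE => /eqP-> /eqP->.
  by rewrite subrr mulr_ge0 ?sqrtr_ge0 // mulr_ge0 // divr_ge0 ?V_ge0 // ltW ?subr_gamma_gt0.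
apply: (iid_prob_ge_compl w0 w1 (prob_bad_event_le Pi_gt1)) => d.
by rewrite negb_or => /andP[]; exact: regret_le_on_good_event.
Qed.

End Regret.

Theorem theorem2 (R : realType) :
  exists c0 c : R, 0 < c0 /\ 0 < c /\
  forall (S A : finType)
    (P : S -> A -> {ffun S -> R}) (Rw : S -> A -> R) (Rmax gamma : R)
    (d0 : {ffun S -> R}) (dD : {ffun S * A -> R})
    (F : seq (qfun R S A)) (Pi : seq (policy R S A)) (pi_cp : policy R S A)
    (n : nat) (delta : R)
    (pi_hat : {ffun 'I_n -> sample S A} -> policy R S A),
  is_kernel P ->
  (forall s a, 0 <= Rw s a <= Rmax) ->
  0 <= gamma < 1 ->
  is_dist_S d0 ->
  is_dist_SA dD ->
  (forall pi, pi \in Pi -> is_policy pi) ->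
  uniq F -> uniq Pi ->
  (forall f, f \in F -> forall x, 0 <= f x <= Rmax / (1 - gamma)) ->
  pi_cp \in Pi ->
  conc_finite P gamma d0 dD pi_cp ->
  (forall f, f \in F -> bellman P Rw gamma pi_cp f \in F) ->
  (forall pi, pi \in Pi -> Qpi P Rw gamma pi \in F) ->
  (0 < n)%N ->
  0 < delta < 1 ->
  let Vmax := Rmax / (1 - gamma) in
  let lg := ln ((size F)%:R * (size Pi)%:R / delta) in
  let eps0 := c0 * Vmax ^+ 2 * lg / n%:R in
  (forall data, pi_hat data \in Pi /\
     forall pi, pi \in Pi ->
       (Jminus_VS Rw gamma d0 F eps0 data pi
          <= Jminus_VS Rw gamma d0 F eps0 data (pi_hat data))%E) ->
  prob_data P dD
    (fun data => Jpi P Rw gamma d0 pi_cp - Jpi P Rw gamma d0 (pi_hat data)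
       <= c * (Vmax / (1 - gamma))
            * Num.sqrt (conc P gamma d0 dD pi_cp * lg / n%:R))
  >= 1 - delta.
Proof.
exists 32, 12; split; first by rewrite ltr0n.
split; first by rewrite ltr0n.
move=> S A P Rw Rmax gamma d0 dD F Pi pi_cp n delta pi_hat HP HR Hg Hd0 HdD HPi _ _
  HF Hcp Hconc Hcompl Hreal Hn Hdelta Vmax lg eps0 Hhat.
exact: regret_bound_whp HP HR Hg Hd0 HdD HPi HF Hcp Hconc Hcompl Hreal Hn Hdelta Hhat.
Qed.
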